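(* Let $E,H$ be finite directed graphs and $\xi^0,\xi^1:H\to E$ an embedding pair. Then the associated self-similar groupoid action $(G_\xi,E)$ is contracting and regular.
   Context: Graph paths: finite paths $\mu_1\cdots\mu_n$ with $s(\mu_i)=r(\mu_{i+1})$; $E^k$ paths of length $k$; $vE^*$ paths with range $v$. Embedding pair: injective graph homomorphisms $\xi^0,\xi^1:H\to E$ with $\xi^0|_{H^0}=\xi^1|_{H^0}$ and $\xi^0(H^1)\cap\xi^1(H^1)=\emptyset$; $H^1_\xi=\xi^0(H^1)\cup\xi^1(H^1)$. On the group bundle $\mathbb{Z}\times E^0$ ($(m,v)(n,v)=(m+n,v)$, domain = codomain $=v$) define for $e\in vE^1$: if $e\notin H^1_\xi$, $(m,v)\cdot e=e$, $(m,v)|_e=(0,s(e))$; if $e=\xi^i(h)$, $h\in H^1$, writing $m+i=2n+j$ with $j\in\{0,1\}$, $n\in\mathbb{Z}$: $(m,v)\cdot e=\xi^j(h)$, $(m,v)|_e=(n,s(e))$; extend to paths by $g\cdot(e\nu)=(g\cdot e)(g|_e\cdot\nu)$, $g|_{e\nu}=(g|_e)|_\nu$. $G_\xi$ is the quotient of $\mathbb{Z}\times E^0$ by elements acting trivially on $E^*$; $(G_\xi,E)$ is a faithful self-similar groupoid action. Contracting: there is a finite $F\subseteq G_\xi$ such that for every $g$ there is $n\ge0$ with $g|_\mu\in F$ for all $\mu\in d(g)E^k$, $k\ge n$. Regular: for every $g$ there is $K\in\mathbb{N}$ such that $g\cdot\mu=\mu$ and $|\mu|\ge K$ imply $g|_\mu$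 is the unit at $s(\mu)$. *)

From mathcomp Require Import all_boot all_order all_algebra.
Set Implicit Arguments. Unset Strict Implicit. Unset Printing Implicit Defensive.
Import GRing.Theory Num.Theory.

(* A finite path mu_1 ... mu_n with range v (an element of vE^* ) is encoded
   as the pair (v, [:: mu_1; ...; mu_n]) with r(mu_1) = v and
   s(mu_i) = r(mu_(i+1)).  The empty path at v is (v, [::]). *)

Section Paths.
Variables (V Ed : finType) (r s : Ed -> V).

Fixpoint is_path (v : V) (p : seq Ed) : bool :=
  if p is e :: p' then (r e == v) && is_path (s e) p' else true.

Definition path_src (v : V) (p : seq Ed) : V := last v [seq s e | e <- p].

Definition graph_hom (VH EH : finType) (rH sH : EH -> VH)
    (fv : VH -> V) (fe : EH -> Ed) : Prop :=
  forall h, r (fe h) = fv (rH h) /\ s (fe h) = fv (sH h).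
End Paths.

Definition embedding_pair (VE EE VH EH : finType) (rE sE : EE -> VE)
    (rH sH : EH -> VH) (x0v x1v : VH -> VE) (x0e x1e : EH -> EE) : Prop :=
  [/\ graph_hom rE sE rH sH x0v x0e /\ graph_hom rE sE rH sH x1v x1e,
      injective x0v /\ injective x0e, injective x1v /\ injective x1e,
      (forall w, x0v w = x1v w) &
      (forall h h', x0e h <> x1e h')].

Local Open Scope ring_scope.

Section Action.
Variables (EE EH : finType) (x0e x1e : EH -> EE).

(* For the group bundle element (m, r(e)) acting on the edge e, returns
   (g . e, n) where g|_e = (n, s(e)). *)
Definition edge_act (m : int) (e : EE) : EE * int :=
  let res (h : EH) (i : int) :=
    let z := m + i in
    ((if (z %% 2)%Z == 1 then x1e h else x0e h), (z %/ 2)%Z) in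
  match [pick h | x0e h == e] with
  | Some h => res h 0
  | None =>
    match [pick h | x1e h == e] with
    | Some h => res h 1
    | None => (e, 0)
    end
  end.

(* Action on paths: returns (g . mu, k) where g|_mu = (k, s(mu)).
   g . (e nu) = (g . e)(g|_e . nu),  g|_(e nu) = (g|_e)|_nu,
   and on the empty path g . v = v, g|_v = g. *)
Fixpoint path_act (m : int) (p : seq EE) : seq EE * int :=
  match p with
  | [::] => ([::], m)
  | e :: p' =>
    let (e', n) := edge_act m e in
    let (q, k) := path_act n p' in (e' :: q, k)
  end.
End Action.

Section Groupoid.
Variables (VE EE EH : finType) (rE sE : EE -> VE) (x0e x1e : EH -> EE).

Definition acts_trivially (v : VE) (m : int) : Prop :=
  forall p, is_path rE sE v p -> (path_act x0e x1e m p).1 = p.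

(* Equality in the quotient G_xi: (m, v) and (m', v') represent the same
   element of G_xi iff v = v' and (m - m', v) acts trivially on E^*
   (quotient of Z x E^0 by the elements acting trivially). *)
Definition Gxi_eq (g g' : int * VE) : Prop :=
  g.2 = g'.2 /\ acts_trivially g.2 (g.1 - g'.1).

Definition contracting : Prop :=
  exists F : seq (int * VE),
    forall (m : int) (v : VE), exists n : nat,
      forall p, is_path rE sE v p -> (n <= size p)%N ->
        exists f, f \in F /\
          Gxi_eq ((path_act x0e x1e m p).2, path_src sE v p) f.

Definition regular : Prop :=
  forall (m : int) (v : VE), exists K : nat,
    forall p, is_path rE sE v p ->
      (path_act x0e x1e m p).1 = p -> (K <= size p)%N ->
      Gxi_eq ((path_act x0e x1e m p).2, path_src sE v p) (0, path_src sE v p).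
End Groupoid.

From mathcomp Require Import all_boot all_order all_algebra.
From mathcomp Require Import zify.
Import GRing.Theory.
Local Open Scope ring_scope.

(* The restriction of (m, r(e)) at the edge e is 0, floor(m/2) or
   floor((m+1)/2), so |m| decreases by at least one at every edge until it
   lies in {-1, 0, 1}; hence {-1, 0, 1} x E^0 witnesses contraction.  If |m| <= 1 and
   (m, r(e)) fixes e = xi^i(h), then m + i = i mod 2 because the images of
   xi^0 and xi^1 are disjoint, so m = 0, and (0, v) acts trivially with
   trivial restrictions.  This gives regularity with K = |m|. *)

Section EdgeAction.
Variables (EE EH : finType) (x0e x1e : EH -> EE).

Lemma edge_actP (m : int) (e : EE) :
  edge_act x0e x1e m e = (e, 0) \/
  exists h (i : int), (i = 0 /\ x0e h = e \/ i = 1 /\ x1e h = e) /\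
    edge_act x0e x1e m e =
      ((if ((m + i) %% 2)%Z == 1 then x1e h else x0e h), ((m + i) %/ 2)%Z).
Proof.
rewrite /edge_act; case: pickP => [h /eqP x0h|_].
  by right; exists h, 0; split; [left|].
case: pickP => [h /eqP x1h|_]; last by left.
by right; exists h, 1; split; [right|].
Qed.

Lemma edge_act0 (e : EE) : edge_act x0e x1e 0 e = (e, 0).
Proof. by case: (edge_actP 0 e) => [|[h [i [[[-> <-]|[-> <-]] ->]]]]. Qed.

Lemma edge_act_restr_le (m : int) (e : EE) :
  (`|(edge_act x0e x1e m e).2| <= maxn 1 `|m|.-1)%N.
Proof. by case: (edge_actP m e) => [->|[h [i [[[-> _]|[-> _]] ->]]]] /=; lia. Qed.

Lemma path_act_cons (m : int) (e : EE) (p : seq EE) :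
  path_act x0e x1e m (e :: p) =
  ((edge_act x0e x1e m e).1 :: (path_act x0e x1e (edge_act x0e x1e m e).2 p).1,
   (path_act x0e x1e (edge_act x0e x1e m e).2 p).2).
Proof. by rewrite /=; case: edge_act => e' n; case: path_act. Qed.

Lemma path_act0 (p : seq EE) : path_act x0e x1e 0 p = (p, 0).
Proof. by elim: p => [|e p IHp] //; rewrite path_act_cons edge_act0 /= IHp. Qed.

Lemma path_act_restr_le1 (m : int) (p : seq EE) :
  (`|m|.-1 <= size p)%N -> (`|(path_act x0e x1e m p).2| <= 1)%N.
Proof.
elim: p m => [|e p IHp] m; first by rewrite /=; lia.
rewrite path_act_cons /= => le_m_p; apply: IHp.
have := edge_act_restr_le m e; lia.
Qed.

Hypothesis xi_disjoint : forall h h', x0e h <> x1e h'.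

Lemma edge_act_fix_restr0 (m : int) (e : EE) : (`|m| <= 1)%N ->
  (edge_act x0e x1e m e).1 = e -> (edge_act x0e x1e m e).2 = 0.
Proof.
move=> le_m1.
case: (edge_actP m e) => [->//|[h [i [[[-> <-]|[-> <-]] ->]]]] /=;
  case: ifP => parity fixed //; try lia.
- by case: (xi_disjoint h h).
- by case: (xi_disjoint h h).
Qed.

Lemma path_act_fix_restr0 (m : int) (p : seq EE) : (`|m| <= size p)%N ->
  (path_act x0e x1e m p).1 = p -> (path_act x0e x1e m p).2 = 0.
Proof.
elim: p m => [|e p IHp] m; first by rewrite /=; lia.
rewrite path_act_cons /= => le_m_p [fix_e fix_p].
have [le_m1|gt_m1] := leqP `|m| 1.
  by rewrite edge_act_fix_restr0 ?path_act0.
apply: IHp => //; have := edge_act_restr_le m e; lia.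
Qed.

End EdgeAction.

Section Restrictions.
Variables (VE EE EH : finType) (rE sE : EE -> VE) (x0e x1e : EH -> EE).

Lemma Gxi_eq_refl (g : int * VE) : Gxi_eq rE sE x0e x1e g g.
Proof. by split=> // p _; rewrite subrr path_act0. Qed.

Definition small_bundle : seq (int * VE) :=
  [seq (k, v) | k <- [:: -1; 0; 1], v <- enum VE].

Lemma mem_small_bundle (k : int) (v : VE) :
  (`|k| <= 1)%N -> (k, v) \in small_bundle.
Proof.
move=> le_k1; apply: allpairs_f; last by rewrite mem_enum.
by have [->|[->|->]] : k = -1 \/ k = 0 \/ k = 1 by lia.
Qed.

End Restrictions.

Theorem proposition4p1 (VE EE VH EH : finType) (rE sE : EE -> VE)
    (rH sH : EH -> VH) (x0v x1v : VH -> VE) (x0e x1e : EH -> EE) :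
  embedding_pair rE sE rH sH x0v x1v x0e x1e ->
  contracting rE sE x0e x1e /\ regular rE sE x0e x1e.
Proof.
case=> _ _ _ _ xi_disjoint; split.
  exists (small_bundle VE) => m v; exists (`|m|.-1)%N => p _ le_m_p.
  exists ((path_act x0e x1e m p).2, path_src sE v p).
  split; last exact: Gxi_eq_refl.
  exact/mem_small_bundle/path_act_restr_le1.
move=> m v; exists `|m|%N => p _ fix_p le_m_p.
rewrite path_act_fix_restr0 //; exact: Gxi_eq_refl.
Qed.
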